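(* Let $n=2^k$ for some integer $k\ge1$. Let $V=\{v\in\{-1,1\}^n : v_1=1\}$, $P(V)=\{\sum_{v\in W}v : W\subseteq V\}$, $g(V)=\frac12\sum_{v\in V}v$, $\mathbf{1}=(1,\dots,1)\in\mathbb{R}^n$, $M=2^{n-2}-\frac12\binom{n-1}{n/2}+\frac12$, and $K_M=\{(x_1,\dots,x_n)\in\mathbb{R}^n : x_i\le M\ \forall i\}$. Then there exists $w\in\mathbb{Z}^n$ with $w_i\le 1$ for all $i$ such that \[0\in P(V)-g(V)-\tfrac12\binom{n-1}{n/2}\mathbf{1}+\tfrac12 w\subset K_M.\] *)

From mathcomp Require Import all_boot all_order all_algebra.
Unset Printing Implicit Defensive.
Import Order.TTheory GRing.Theory Num.Theory.
Local Open Scope ring_scope.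

Definition signvec (R : nzRingType) (n : nat) (s : {ffun 'I_n -> bool}) : 'rV[R]_n :=
  \row_i (if s i then 1 else -1).

(* V = { v in {-1,1}^n : v_1 = 1 } (first coordinate = index 0). *)
Definition Vset (n : nat) : {set {ffun 'I_n -> bool}} :=
  [set s : {ffun 'I_n -> bool} | [forall i : 'I_n, (val i == 0)%N ==> s i]].

Definition PV (R : nzRingType) (n : nat) (x : 'rV[R]_n) : Prop :=
  exists W : {set {ffun 'I_n -> bool}},
    W \subset Vset n /\ x = \sum_(s in W) signvec R n s.

Definition gV (R : fieldType) (n : nat) : 'rV[R]_n :=
  2^-1 *: \sum_(s in Vset n) signvec R n s.

Definition ones (R : nzRingType) (n : nat) : 'rV[R]_n := \row_i 1.

Definition Mbound (R : fieldType) (n : nat) : R :=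
  (2 ^ (n - 2))%N%:R - 2^-1 * ('C(n.-1, n %/ 2))%:R + 2^-1.

Definition shiftedPV (R : fieldType) (n : nat) (w : 'I_n -> int) (y : 'rV[R]_n) : Prop :=
  exists x : 'rV[R]_n, PV R n x /\
    y = x - gV R n - (2^-1 * ('C(n.-1, n %/ 2))%:R) *: ones R n
        + 2^-1 *: (\row_i ((w i)%:~R : R)).

Definition KM (R : realFieldType) (n : nat) (M : R) (y : 'rV[R]_n) : Prop :=
  forall i : 'I_n, y ord0 i <= M.

(* Write n = 2m + 2 and N = n - 1 = 2m + 1 (only the evenness of n = 2^k matters), and
   identify V with the subsets of 'I_N: the sign vector of A has first coordinate 1 and
   coordinate j + 1 equal to -1 iff j \in A.  The inclusion in K_M holds for any w <= 1,
   because each v in V contributes at most 1/2 to a coordinate of a subset sum minus g(V).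
   With C = 'C(N, m + 1), choosing w := C + 2 g(V) - 2 x, the point 0 lies in the set
   for the subset sum x of a family F of subsets as soon as 2 |F| + 1 >= 2^N + C and,
   for every j, 2 (#{A in F | j \notin A} - #{A in F | j \in A}) + 1 >= C.
   Take F = {sets of size <= m} together with t = ceil(c/2) orbits of (m+1)-sets under
   cyclic rotation: since gcd(N, m + 1) = 1 rotation acts freely on (m+1)-sets, so C = c N
   for c orbits, and a union of t orbits contains every point in exactly t (m + 1) of its
   t N sets.  Toggling j shows that the small sets contribute c (m + 1) to the difference
   above, the orbits contribute -t, and 2 (c (m + 1) - t) + 1 >= c N since 2 t <= c + 1. *)

From mathcomp Require Import all_boot all_order all_algebra.
From mathcomp Require Import zify ring lra.
Import Order.TTheory GRing.Theory Num.Theory.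
Set Implicit Arguments. Unset Strict Implicit. Unset Printing Implicit Defensive.
Local Open Scope ring_scope.

Section SetFamilies.
Variable T : finType.
Implicit Types (F G : {set {set T}}) (j : T).

Definition degree F j : nat := (\sum_(A in F) (j \in A))%N.

Definition bias F j : int := \sum_(A in F) (if j \in A then -1 else 1).

Lemma bias_degree F j : bias F j = #|F|%:Z - 2 * (degree F j)%:Z.
Proof.
rewrite /bias /degree -sum1_card -!natz !natr_sum mulr_sumr -sumrB.
by apply: eq_bigr => A _; case: (j \in A).
Qed.

Lemma bias_setU F G j : [disjoint F & G] -> bias (F :|: G) j = bias F j + bias G j.
Proof. by move=> dFG; rewrite /bias -bigU //; apply: eq_bigl => A; rewrite !inE. Qed.

Lemma bias_setT j : bias setT j = 0.
Proof.
have bias_opp : bias setT j = - bias setT j.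
  rewrite /bias [LHS](reindex_inj (@setC_inj T)) -sumrN.
  by apply: eq_big => [A|A _]; rewrite !inE //; case: (j \in A); rewrite ?opprK.
lia.
Qed.

Definition toggle j (A : {set T}) : {set T} := if j \in A then A :\ j else j |: A.

Lemma toggleK j : involutive (toggle j).
Proof.
move=> A; rewrite {2}/toggle; case: ifP => jA.
  by rewrite /toggle setD11 setD1K.
by rewrite /toggle setU11 setU1K ?jA.
Qed.

Lemma mem_toggle j A : (j \in toggle j A) = (j \notin A).
Proof. by rewrite /toggle; case: ifP => jA; rewrite !inE eqxx. Qed.

Lemma card_toggle j A : #|toggle j A| = (if j \in A then #|A|.-1 else #|A|.+1)%N.
Proof.
rewrite /toggle; case: ifP => jA; first by rewrite (cardsD1 j A) jA add1n.
by rewrite cardsU1 jA.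
Qed.

Lemma degreeE F j : degree F j = (\sum_(A in F | j \in A) 1)%N.
Proof. by rewrite big_mkcondr /degree; apply: eq_bigr => A _; case: (j \in A). Qed.

Lemma bias_small_sets m j :
  bias [set A : {set T} | #|A| <= m]%N j = (degree [set A : {set T} | #|A| == m.+1]%N j)%:Z.
Proof.
set small := [set A : {set T} | #|A| <= m]%N.
have toggle_count : (\sum_(A : {set T} | (#|A| <= m.+1) && (j \in A)) 1 =
    \sum_(A in small | j \notin A) 1)%N.
  rewrite (reindex_inj (inv_inj (toggleK j))); apply: eq_bigl => A.
  by rewrite !inE mem_toggle card_toggle; case: (j \in A); rewrite ?andbF ?andbT.
have split_by_size : (\sum_(A : {set T} | (#|A| <= m.+1) && (j \in A)) 1 =
    degree small j + degree [set A : {set T} | #|A| == m.+1]%N j)%N.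
  rewrite (bigID (fun A : {set T} => #|A| <= m)%N) /= !degreeE.
  by congr (_ + _); apply: eq_bigl => A; rewrite !inE;
    case: (j \in A); rewrite ?andbF ?andbT //; lia.
have card_small : #|small| = (degree small j + \sum_(A in small | j \notin A) 1)%N.
  by rewrite -sum1_card (bigID (fun A : {set T} => j \in A)) /= degreeE.
rewrite bias_degree card_small -toggle_count split_by_size; lia.
Qed.

Lemma card_small_sets m : #|T| = m.*2.+1 ->
  (#|[set A : {set T} | #|A| <= m]|.*2 = 2 ^ #|T|)%N.
Proof.
move=> cardT; set small := [set A : {set T} | #|A| <= m]%N.
have small_compl : ~: small = @setC T @^-1: small.
  apply/setP => A; rewrite !inE -ltnNge; have := cardsC A; lia.
rewrite -addnn -{1}(card_preimset small (@setC_inj T)) -small_compl addnC cardsC.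
by rewrite -cardsT -powersetT card_powerset cardsT.
Qed.

End SetFamilies.

Section CyclicShifts.
Variables (N' k : nat).
Local Notation N := N'.+1.
Implicit Types (A B : {set 'I_N}) (R : {set {set 'I_N}}) (d j x : 'I_N).

Definition rot d A : {set 'I_N} := [set x | x - d \in A].

Definition weight A : 'I_N := \sum_(x in A) x.

Lemma mem_rot d A x : (x \in rot d A) = (x - d \in A).
Proof. by rewrite inE. Qed.

Lemma card_rot d A : #|rot d A| = #|A|.
Proof. exact/card_preimset/subIr. Qed.

Lemma rotK d : cancel (rot (- d)) (rot d).
Proof. by move=> A; apply/setP => x; rewrite !mem_rot opprK subrK. Qed.

Lemma rotNK d : cancel (rot d) (rot (- d)).
Proof. by move=> A; apply/setP => x; rewrite !mem_rot opprK addrK. Qed.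

Lemma weight_rot d A : weight (rot d A) = weight A + d *+ #|A|.
Proof.
rewrite /weight (reindex_inj (addIr d)) /=.
rewrite (eq_bigl (mem A)) => [|x]; last by rewrite mem_rot addrK.
by rewrite big_split /= sumr_const.
Qed.

Hypothesis coprime_Nk : coprime N k.

Lemma mulrn_coprime_inj : injective (fun d : 'I_N => d *+ k).
Proof.
have mulrn_eq0 d : d *+ k = 0 -> d = 0.
  move/(congr1 val); rewrite Zp_mulrn /= => /eqP; rewrite -/(dvdn N (d * k)).
  rewrite Gauss_dvdl // => N_dvd_d; apply: val_inj => /=.
  case: (posnP d) => // d_gt0; have := dvdn_leq d_gt0 N_dvd_d; have := ltn_ord d; lia.
by move=> d e /eqP; rewrite -subr_eq0 -mulrnBl => /eqP/mulrn_eq0/subr0_eq.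
Qed.

Definition ksets : {set {set 'I_N}} := [set A : {set 'I_N} | #|A| == k]%N.

(* Rotating a k-set by d adds d *+ k to its weight, and d |-> d *+ k is bijective, so each
   rotation orbit of k-sets meets weight 0 exactly once. *)
Definition rot_reps : {set {set 'I_N}} := [set A in ksets | weight A == 0].

Definition rot_orbits (R : {set {set 'I_N}}) : {set {set 'I_N}} :=
  [set rot p.2 p.1 | p in setX R [set: 'I_N]].

Lemma rot_orbits_inj : {in setX rot_reps setT &, injective (fun p => rot p.2 p.1)}.
Proof.
move=> [A d] [B e]; rewrite !inE /= !andbT => /andP[/eqP cardA /eqP weightA].
move=> /andP[/eqP cardB /eqP weightB] /= rot_eq.
have de : d = e.
  apply: mulrn_coprime_inj; move: (congr1 weight rot_eq).
  by rewrite !weight_rot weightA weightB cardA cardB !add0r.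
by move: rot_eq; rewrite de => /(can_inj (rotNK e)) ->.
Qed.

Lemma rot_orbits_reps : rot_orbits rot_reps = ksets.
Proof.
apply/setP => B; apply/imsetP/idP => [[[A d]]|].
  by rewrite !inE /= andbT => /andP[cardA _] ->; rewrite card_rot.
rewrite inE => /eqP cardB.
have [mulrn_inv _ mulrn_invK] := injF_bij mulrn_coprime_inj.
set d := mulrn_inv (weight B).
exists (rot (- d) B, d); last by rewrite rotK.
by rewrite !inE /= card_rot cardB weight_rot mulNrn cardB mulrn_invK subrr !eqxx.
Qed.

Lemma card_rot_orbits R : R \subset rot_reps -> #|rot_orbits R| = (#|R| * N)%N.
Proof.
move=> sub_reps; rewrite card_in_imset ?cardsX ?cardsT ?card_ord //.
by apply: sub_in2 rot_orbits_inj => p; apply/subsetP/setXS.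
Qed.

Lemma degree_rot_orbits R j : R \subset rot_reps -> degree (rot_orbits R) j = (#|R| * k)%N.
Proof.
move=> sub_reps; rewrite /degree big_imset /=; last first.
  by apply: sub_in2 rot_orbits_inj => p; apply/subsetP/setXS.
transitivity (\sum_(A in R) \sum_(d : 'I_N) (j \in rot d A))%N.
  by rewrite pair_big /=; apply: eq_bigl => -[A d]; rewrite !inE andbT.
rewrite -sum_nat_const; apply: eq_bigr => A /(subsetP sub_reps).
rewrite !inE => /andP[/eqP <- _].
rewrite -sum1_card [RHS]big_mkcond (reindex_inj (subrI j)) /=.
by apply: eq_bigr => d _; rewrite mem_rot subKr; case: (d \in A).
Qed.

End CyclicShifts.

Lemma exists_balanced_family m : exists F : {set {set 'I_(m.*2.+1)}},
  (2 ^ m.*2.+1 + 'C(m.*2.+1, m.+1) <= #|F|.*2.+1)%N /\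
  forall j, ('C(m.*2.+1, m.+1))%:Z <= 2 * bias F j + 1.
Proof.
have coprime_Nk : coprime m.*2.+1 m.+1.
  by rewrite coprime_sym /coprime -addnn -addSn gcdnDl; apply: coprimeSn.
set reps := rot_reps m.*2 m.+1; set c := #|reps|.
have binomE : 'C(m.*2.+1, m.+1) = (c * m.*2.+1)%N.
  by rewrite -(card_rot_orbits coprime_Nk) // rot_orbits_reps // card_draws card_ord.
have degree_ksets j : degree (ksets m.*2 m.+1) j = (c * m.+1)%N.
  by rewrite -rot_orbits_reps // (degree_rot_orbits coprime_Nk).
have [R [sub_reps cardR]] :
    exists R : {set {set 'I_(m.*2.+1)}}, R \subset reps /\ #|R| = uphalf c.
  have /(@card_geqP _ (mem reps))[s [uniq_s size_s sub_s]] : (uphalf c <= c)%N by lia.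
  exists [set A in s]; split; first by apply/subsetP => A; rewrite inE; apply: sub_s.
  by rewrite cardsE (card_uniqP uniq_s).
set small := [set A : {set 'I_(m.*2.+1)} | #|A| <= m]%N.
set T := rot_orbits R.
have disj : [disjoint small & T].
  have /subsetP sub_ksets : T \subset ksets m.*2 m.+1.
    by rewrite -rot_orbits_reps // imsetS // setXS.
  rewrite -setI_eq0; apply/eqP/setP => A; rewrite !inE.
  by apply/negbTE/andP => -[small_A /sub_ksets]; rewrite inE; lia.
exists (small :|: T); split.
  rewrite cardsU (disjoint_setI0 disj) cards0 subn0 doubleD card_small_sets ?card_ord //.
  rewrite (card_rot_orbits coprime_Nk) // cardR binomE; nia.
move=> j; rewrite bias_setU // bias_small_sets degree_ksets bias_degree.
rewrite (card_rot_orbits coprime_Nk) // (degree_rot_orbits coprime_Nk) // cardR binomE; lia.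
Qed.

Definition signsum n (W : {set {ffun 'I_n -> bool}}) (i : 'I_n) : int :=
  \sum_(s in W) (if s i then 1 else -1).

Lemma sum_signvecE (R : nzRingType) n (W : {set {ffun 'I_n -> bool}}) i :
  (\sum_(s in W) signvec R n s) ord0 i = (signsum W i)%:~R.
Proof.
rewrite summxE rmorph_sum; apply: eq_bigr => s _.
by rewrite mxE; case: (s i); rewrite ?rmorphN.
Qed.

Lemma signsum_sub_le n (V W : {set {ffun 'I_n -> bool}}) i :
  W \subset V -> 2 * signsum W i - signsum V i <= #|V|%:Z.
Proof.
move=> sub_WV.
have signsum_le X : signsum X i <= #|X|%:Z.
  by rewrite -sum1_card -natz natr_sum; apply: ler_sum => s _; case: (s i).
have signsum_ge X : - signsum X i <= #|X|%:Z.
  by rewrite -sum1_card -natz natr_sum -sumrN; apply: ler_sum => s _; case: (s i).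
have signsum_split : signsum V i = signsum W i + signsum (V :\: W) i.
  by rewrite /signsum (big_setID W) /= (setIidPr sub_WV).
have card_split : #|V| = (#|W| + #|V :\: W|)%N by rewrite -(cardsID W V) (setIidPr sub_WV).
rewrite signsum_split card_split; have := signsum_le W; have := signsum_ge (V :\: W); lia.
Qed.

Definition set_signs n (A : {set 'I_n}) : {ffun 'I_n.+1 -> bool} :=
  [ffun i => if unlift ord0 i is Some j then j \notin A else true].

Lemma set_signs0 n (A : {set 'I_n}) : set_signs A ord0.
Proof. by rewrite ffunE unlift_none. Qed.

Lemma set_signs_lift n (A : {set 'I_n}) j : set_signs A (lift ord0 j) = (j \notin A).
Proof. by rewrite ffunE liftK. Qed.

Lemma set_signs_inj n : injective (@set_signs n).
Proof.
move=> A B eq_AB; apply/setP => j; apply: negb_inj.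
by rewrite -!set_signs_lift eq_AB.
Qed.

Lemma Vset_set_signs n : Vset n.+1 = @set_signs n @: setT.
Proof.
apply/setP => s; rewrite inE; apply/forallP/imsetP => [s0|[A _ ->] i].
  exists [set j | ~~ s (lift ord0 j)] => //; apply/ffunP => i.
  case: (unliftP ord0 i) => [j|] ->; first by rewrite set_signs_lift inE negbK.
  by rewrite set_signs0; apply: (implyP (s0 ord0)).
apply/implyP => /eqP i0; have -> : i = ord0 by apply: val_inj.
exact: set_signs0.
Qed.

Lemma card_Vset n : #|Vset n.+1| = (2 ^ n)%N.
Proof.
rewrite Vset_set_signs card_imset; last exact: set_signs_inj.
by rewrite -powersetT card_powerset cardsT card_ord.
Qed.

Lemma signsum_set_signs0 n (F : {set {set 'I_n}}) :
  signsum (@set_signs n @: F) ord0 = #|F|%:Z.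
Proof.
rewrite /signsum big_imset /=; last by move=> A B _ _; apply: set_signs_inj.
by rewrite -sum1_card -natz natr_sum; apply: eq_bigr => A _; rewrite set_signs0.
Qed.

Lemma signsum_set_signs_lift n (F : {set {set 'I_n}}) j :
  signsum (@set_signs n @: F) (lift ord0 j) = bias F j.
Proof.
rewrite /signsum big_imset /=; last by move=> A B _ _; apply: set_signs_inj.
by apply: eq_bigr => A _; rewrite set_signs_lift; case: (j \in A).
Qed.

Lemma signsum_Vset0 n : signsum (Vset n.+1) ord0 = (2 ^ n)%N%:Z.
Proof.
rewrite -card_Vset {1}Vset_set_signs signsum_set_signs0 Vset_set_signs card_imset //.
exact: set_signs_inj.
Qed.

Lemma signsum_Vset_lift n j : signsum (Vset n.+1) (lift ord0 j) = 0.
Proof. by rewrite Vset_set_signs signsum_set_signs_lift bias_setT. Qed.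

Lemma shiftedPV_zero (R : numFieldType) n (W : {set {ffun 'I_n -> bool}}) :
  W \subset Vset n ->
  shiftedPV R n (fun i => ('C(n.-1, n %/ 2))%:Z + signsum (Vset n) i - 2 * signsum W i) 0.
Proof.
move=> sub_W; exists (\sum_(s in W) signvec R n s); split; first by exists W.
apply/rowP => i; rewrite /gV /ones !mxE !sum_signvecE.
by rewrite intrB intrD intrM /=; field.
Qed.

Lemma shiftedPV_KM (R : realFieldType) n (w : 'I_n.+2 -> int) (y : 'rV[R]_n.+2) :
  (forall i, w i <= 1) -> shiftedPV R n.+2 w y -> KM R n.+2 (Mbound R n.+2) y.
Proof.
move=> w_le1 [x [[W [sub_W ->]] ->]] i.
have := signsum_sub_le i sub_W; rewrite card_Vset -(ler_int R) intrB intrM -!pmulrn.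
rewrite expnS natrM /= => signsum_bound.
have w_bound : (w i)%:~R <= 1 :> R by rewrite lerz1.
rewrite /gV /ones /Mbound !mxE !sum_signvecE /= !subSS subn0; lra.
Qed.

Theorem lemma4p5 (R : realFieldType) (k : nat) (hk : (1 <= k)%N) :
  exists w : 'I_(2 ^ k) -> int,
    (forall i, w i <= 1) /\
    shiftedPV R (2 ^ k) w 0 /\
    (forall y : 'rV[R]_(2 ^ k), shiftedPV R (2 ^ k) w y -> KM R (2 ^ k) (Mbound R (2 ^ k)) y).
Proof.
have [m ->] : exists m, (2 ^ k = m.*2.+2)%N.
  exists (2 ^ k.-1 - 1)%N; case: k hk => // k _ /=; rewrite expnS; have := expn_gt0 2 k; lia.
have [F [card_F bias_F]] := exists_balanced_family m.
set W := @set_signs m.*2.+1 @: F.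
have sub_W : W \subset Vset m.*2.+2 by rewrite Vset_set_signs imsetS ?subsetT.
pose w i := ('C(m.*2.+1, m.*2.+2 %/ 2))%:Z + signsum (Vset m.*2.+2) i - 2 * signsum W i.
have w_le1 i : w i <= 1.
  have half_n : (m.*2.+2 %/ 2 = m.+1)%N by rewrite -doubleS divn2 doubleK.
  rewrite /w half_n; case: (unliftP ord0 i) => [j|] ->.
    by rewrite signsum_Vset_lift signsum_set_signs_lift; have := bias_F j; lia.
  by rewrite signsum_Vset0 signsum_set_signs0; lia.
exists w; split => //; split; first exact: shiftedPV_zero.
by move=> y; apply: shiftedPV_KM.
Qed.
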